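(* For $i = 1, \ldots, m-1$ the following hold. (a) $\mathcal{Q}_{i}^{\mathbb{B}}(\lambda \mathcal{D}_{i})\mathcal{R}_{i} = \lambda \mathcal{D}_{i+1} + \mathcal{T}_{i}$, and $\mathcal{Q}_{i}^{\mathbb{B}}(\mathbb{M}_{m-(i+1)}\mathbb{M}_{m-i})\mathcal{R}_{i} = \mathbb{M}_{m-(i+1)} + \mathcal{T}_{i}$. (b) $\mathcal{R}_{i}^{\mathbb{B}}(\lambda \mathcal{D}_{i})\mathcal{Q}_{i} = \lambda \mathcal{D}_{i+1} + \mathcal{T}_{i}^{\mathbb{B}}$, and $\mathcal{R}_{i}^{\mathbb{B}}(\mathbb{M}_{m-i}\mathbb{M}_{m-(i+1)})\mathcal{Q}_{i} = \mathbb{M}_{m-(i+1)} + \mathcal{T}_{i}^{\mathbb{B}}$. (c) $\mathcal{T}_{i}\mathbb{M}_{j} = \mathbb{M}_{j}\mathcal{T}_{i} = \mathcal{T}_{i}$ and $\mathcal{T}_{i}^{\mathbb{B}}\mathbb{M}_{j} = \mathbb{M}_{j}\mathcal{T}_{i}^{\mathbb{B}} = \mathcal{T}_{i}^{\mathbb{B}}$ for all $j \leq m-i-2$.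
   Context: Let $P(\lambda) = \sum_{j=0}^m \lambda^j A_j$ ($A_j\in\mathbb{C}^{n\times n}$, $A_m\ne 0$) and $\mathcal{S}(\lambda) = \left[\begin{array}{c|c} P(\lambda) & C \\ \hline B & A-\lambda E\end{array}\right]$ with $A,E\in\mathbb{C}^{r\times r}$, $B\in\mathbb{C}^{r\times n}$, $C\in\mathbb{C}^{n\times r}$. Fiedler matrices: $M_0=\mathrm{diag}(I_{(m-1)n},-A_0)$, $M_m = \mathrm{diag}(A_m,I_{(m-1)n})$, $M_i=\mathrm{diag}\left(I_{(m-i-1)n},\left[\begin{smallmatrix}-A_i & I_n\\ I_n & 0\end{smallmatrix}\right],I_{(i-1)n}\right)$ for $1\le i\le m-1$; $\mathbb{M}_0 = \left[\begin{array}{c|c} M_0 & -e_m\otimes C\\ \hline -e_m^T\otimes B & -A\end{array}\right]$ ($e_m$ the $m$-th column of $I_m$), $\mathbb{M}_m=\mathrm{diag}(M_m,-E)$, $\mathbb{M}_i=\mathrm{diag}(M_i,I_r)$. Horner shifts: $P_k(\lambda) = A_{m-k}+\lambda A_{m-k+1}+\cdots+\lambda^k A_m$, $k=0,\ldots,m$. For $1\le i\le m-1$ define $nm\times nm$ matrix polynomials $Q_i = \mathrm{diag}\left(I_{(i-1)n},\left[\begin{smallmatrix} I_n & \lambda I_n\\ 0_n & I_n\end{smallmatrix}\right], I_{(m-i-1)n}\right)$, $R_i = \mathrm{diag}\left(I_{(i-1)n},\left[\begin{smallmatrix} 0_n & I_n\\ I_n & P_i(\lambda)\end{smallmatrix}\right],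 I_{(m-i-1)n}\right)$, $T_i = \mathrm{diag}\left(0_{(i-1)n},\left[\begin{smallmatrix} 0_n & \lambda P_{i-1}(\lambda)\\ \lambda I_n & \lambda^2 P_{i-1}(\lambda)\end{smallmatrix}\right], 0_{(m-i-1)n}\right)$, $D_i = \mathrm{diag}(0_{(i-1)n}, P_{i-1}(\lambda), I_{(m-i)n})$, and $D_m = \mathrm{diag}(0_{(m-1)n}, P_{m-1}(\lambda))$. The $(nm+r)\times(nm+r)$ auxiliary system polynomials are $\mathcal{Q}_i = \mathrm{diag}(Q_i, I_r)$, $\mathcal{R}_i=\mathrm{diag}(R_i,I_r)$, $\mathcal{T}_i=\mathrm{diag}(T_i,0_r)$, $\mathcal{D}_i=\mathrm{diag}(D_i,-E)$ ($1\le i\le m$). For a block matrix $H=(H_{ij})$ with $n\times n$ blocks, the block transpose $H^{\mathcal{B}}$ has $(H^{\mathcal{B}})_{ij}=H_{ji}$; for a system matrix $\mathcal{A}=\left[\begin{array}{c|c} A & e_i\otimes X\\ \hline e_j^T\otimes Y & Z\end{array}\right]$ its block transpose is $\mathcal{A}^{\mathbb{B}}=\left[\begin{array}{c|c} A^{\mathcal{B}} & e_j\otimes X\\ \hline e_i^T\otimes Y & Z\end{array}\right]$; in particular $\mathcal{Q}_i^{\mathbb{B}} = \mathrm{diag}(Q_i^{\mathcal{B}}, I_r)$, $\mathcal{R}_i^{\mathbb{B}}=\mathcal{R}_i$, $\mathcal{T}_i^{\mathbb{B}} = \mathrm{diag}(T_i^{\mathcal{B}},0_r)$. *)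

(* Matrices of polynomials in lambda = 'X over a field F. *)
From HB Require Import structures.
From mathcomp Require Import all_boot all_order all_algebra.
Set Implicit Arguments. Unset Strict Implicit. Unset Printing Implicit Defensive.
Import GRing.Theory.
Local Open Scope ring_scope.

Lemma modn_ord_lt (m n : nat) (p : 'I_(m * n)) : (p %% n < n)%N.
Proof.
case: n p => [|n] p; last by rewrite ltn_mod.
by case: p => k; rewrite muln0.
Qed.

Definition mord (m n : nat) (p : 'I_(m * n)) : 'I_n := Ordinal (modn_ord_lt p).

Section Defs.
Variable F : fieldType.
Local Notation PF := {poly F}.

(* An (m*n) x (m*n) matrix given by its n x n blocks f a b,
   with 0-based block indices a, b (block (a,b) is the paper's (a+1,b+1)). *)
Definition mkblk (m n : nat) (f : nat -> nat -> 'M[PF]_n) : 'M[PF]_(m * n) :=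
  \matrix_(p, q) f (p %/ n)%N (q %/ n)%N (mord p) (mord q).

(* block transpose (H^B)_{ab} = H_{ba} on block descriptions *)
Definition blkT (n : nat) (f : nat -> nat -> 'M[PF]_n) : nat -> nat -> 'M[PF]_n :=
  fun a b => f b a.

Definition cst (k l : nat) (M : 'M[F]_(k, l)) : 'M[PF]_(k, l) := map_mx polyC M.

Variables (m n r : nat) (Ac : nat -> 'M[F]_n)
          (A E : 'M[F]_r) (B : 'M[F]_(r, n)) (C : 'M[F]_(n, r)).

Definition horner_shift (k : nat) : 'M[PF]_n :=
  \sum_(j < k.+1) 'X^j *: cst (Ac (m - k + j)%N).

Definition M0_blk (a b : nat) : 'M[PF]_n :=
  if a == b then (if a == (m - 1)%N then - cst (Ac 0%N) else 1%:M) else 0.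
Definition Mm_blk (a b : nat) : 'M[PF]_n :=
  if a == b then (if a == 0%N then cst (Ac m) else 1%:M) else 0.
Definition Mi_blk (i a b : nat) : 'M[PF]_n :=
  let k := (m - i - 1)%N in
  if (a == k) && (b == k) then - cst (Ac i)
  else if ((a == k) && (b == k.+1)) || ((a == k.+1) && (b == k)) then 1%:M
  else if (a == k.+1) && (b == k.+1) then 0
  else if a == b then 1%:M else 0.
Definition fiedler_blk (i : nat) : nat -> nat -> 'M[PF]_n :=
  if i == 0%N then M0_blk else if i == m then Mm_blk else Mi_blk i.

(* e_m (x) C  and  e_m^T (x) B *)
Definition emC : 'M[PF]_(m * n, r) :=
  \matrix_(p, q) if (p %/ n == m - 1)%N then cst C (mord p) q else 0.
Definition emB : 'M[PF]_(r, m * n) :=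
  \matrix_(p, q) if (q %/ n == m - 1)%N then cst B p (mord q) else 0.

Definition sysM (i : nat) : 'M[PF]_(m * n + r) :=
  if i == 0%N then block_mx (mkblk m (fiedler_blk 0)) (- emC) (- emB) (- cst A)
  else if i == m then block_mx (mkblk m (fiedler_blk m)) 0 0 (- cst E)
  else block_mx (mkblk m (fiedler_blk i)) 0 0 1%:M.

(* Q_i, R_i, T_i, D_i blockwise (paper's blocks i, i+1 are 0-based i-1, i) *)
Definition Q_blk (i a b : nat) : 'M[PF]_n :=
  if (a == i.-1) && (b == i) then 'X *: 1%:M
  else if a == b then 1%:M else 0.
Definition R_blk (i a b : nat) : 'M[PF]_n :=
  if (a == i.-1) && (b == i.-1) then 0
  else if ((a == i.-1) && (b == i)) || ((a == i) && (b == i.-1)) then 1%:M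
  else if (a == i) && (b == i) then horner_shift i
  else if a == b then 1%:M else 0.
Definition T_blk (i a b : nat) : 'M[PF]_n :=
  if (a == i.-1) && (b == i) then 'X *: horner_shift i.-1
  else if (a == i) && (b == i.-1) then 'X *: 1%:M
  else if (a == i) && (b == i) then 'X ^+ 2 *: horner_shift i.-1
  else 0.
Definition D_blk (i a b : nat) : 'M[PF]_n :=
  if a == b then
    (if a == i.-1 then horner_shift i.-1 else if (i <= a)%N then 1%:M else 0)
  else 0.

Definition sysQ (i : nat) : 'M[PF]_(m * n + r) :=
  block_mx (mkblk m (Q_blk i)) 0 0 1%:M.
Definition sysQB (i : nat) : 'M[PF]_(m * n + r) :=
  block_mx (mkblk m (blkT (Q_blk i))) 0 0 1%:M.
Definition sysR (i : nat) : 'M[PF]_(m * n + r) :=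
  block_mx (mkblk m (R_blk i)) 0 0 1%:M.
Definition sysRB (i : nat) : 'M[PF]_(m * n + r) :=
  block_mx (mkblk m (blkT (R_blk i))) 0 0 1%:M.
Definition sysT (i : nat) : 'M[PF]_(m * n + r) :=
  block_mx (mkblk m (T_blk i)) 0 0 0.
Definition sysTB (i : nat) : 'M[PF]_(m * n + r) :=
  block_mx (mkblk m (blkT (T_blk i))) 0 0 0.
Definition sysD (i : nat) : 'M[PF]_(m * n + r) :=
  block_mx (mkblk m (D_blk i)) 0 0 (- cst E).

End Defs.

From HB Require Import structures.
From mathcomp Require Import all_boot all_order all_algebra.
From mathcomp Require Import zify.
Set Implicit Arguments. Unset Strict Implicit. Unset Printing Implicit Defensive.
Import GRing.Theory.
Local Open Scope ring_scope.

(* Outside block rows and columns i and i+1 (numbered from 1) the factors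
   Q_i, R_i, D_i, T_i and M_(m-i) are block diagonal, so their products reduce
   to 2 x 2 block computations in that window together with the Horner
   recursion P_i = A_(m-i) + lambda P_(i-1).  Writing E_(a,b) for elementary block
   matrices, this gives M_(m-i) R_i = I + lambda P_(i-1) E_(i,i+1) and
   R_i M_(m-i) = I + lambda P_(i-1) E_(i+1,i), while Q_i = I + lambda E_(i,i+1)
   and Q_i^B = I + lambda E_(i+1,i).  The next Fiedler matrix M_(m-i-1),
   including the system matrix M_0 with its coupling blocks, is trivial in
   block row and column i, so conjugating it by these unipotent factors only
   adds the elementary terms that make up T_i.  The same triviality of every
   M_j with j <= m-i-2 in block rows and columns i and i+1 gives (c). *)

Ltac case_ifs := repeat (case: ifP => ?; try (exfalso; lia)); try done.

Lemma sum_ord_mul (V : nmodType) (m n : nat) (G : nat -> V) :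
  \sum_(s < m * n) G s = \sum_(c < m) \sum_(k < n) G (c * n + k)%N.
Proof.
elim: m => [|m IH]; first by rewrite mul0n !big_ord0.
rewrite big_ord_recr /= -IH -!(big_mkord xpredT) mulSnr.
rewrite (big_cat_nat _ (leq_addr n (m * n)%N)) //=; congr (_ + _).
rewrite -[in LHS](add0n (m * n)%N) big_addn add0n addKn big_mkord.
by apply: eq_bigr => k _; rewrite addnC.
Qed.

Lemma sum_ord_pt (V : nmodType) (m : nat) (G : 'I_m -> V) (c0 : 'I_m) :
  (forall c, c != c0 -> G c = 0) -> \sum_(c < m) G c = G c0.
Proof. by move=> G0; rewrite (bigD1 c0) //= big1 ?addr0. Qed.

Lemma sum_ord_window (V : nmodType) (m w k : nat) (G : nat -> V) :
  (w + k <= m)%N -> (forall c, (c < m)%N -> ~~ (w <= c < w + k)%N -> G c = 0) ->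
  \sum_(c < m) G c = \sum_(z < k) G (w + z)%N.
Proof.
move=> hwk G0; rewrite -(big_mkord xpredT).
rewrite (@big_cat_nat _ _ _ w) /=; [|lia|lia].
rewrite (@big_cat_nat _ _ _ (w + k)%N w) /=; [|lia|lia].
rewrite big1_seq ?add0r; last first.
  by move=> c; rewrite mem_index_iota => /andP[_ hc]; apply: G0; lia.
rewrite [X in _ + X]big1_seq ?addr0; last first.
  by move=> c; rewrite mem_index_iota => /andP[hc1 hc2]; apply: G0; lia.
rewrite -[in LHS](add0n w) big_addn add0n addKn big_mkord.
by apply: eq_bigr => z _; rewrite addnC.
Qed.

Section BlockMatrices.
Variables (F : fieldType) (m n : nat).
Local Notation M := 'M[{poly F}]_n.
Local Notation mkblk := (mkblk m).

Lemma blk_index_lt (p : 'I_(m * n)) : (p %/ n < m)%N.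
Proof. by case: n p => [|n'] [p hp] /=; [rewrite muln0 in hp | rewrite ltn_divLR]. Qed.

Lemma sum_blocks (V : nmodType) (G : nat -> 'I_n -> V) :
  \sum_(s < m * n) G (s %/ n)%N (mord s) = \sum_(c < m) \sum_(k < n) G c k.
Proof.
case: n G => [|n'] G.
  rewrite big1 => [|[s hs] _]; last by have := leq_trans hs (eq_leq (muln0 m)).
  by rewrite big1 // => c _; rewrite big_ord0.
transitivity (\sum_(s < m * n'.+1) G (s %/ n'.+1)%N (inord (s %% n'.+1))).
  by apply: eq_bigr => s _; congr (G _ _); apply: val_inj; rewrite /= inordK // ltn_mod.
rewrite (@sum_ord_mul _ m n'.+1 (fun s => G (s %/ n'.+1)%N (inord (s %% n'.+1)))).
apply: eq_bigr => c _; apply: eq_bigr => k _.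
by rewrite divnMDl // divn_small // addn0 modnMDl modn_small // inord_val.
Qed.

Lemma mkblk_mul (f g : nat -> nat -> M) :
  mkblk f *m mkblk g = mkblk (fun a b => \sum_(c < m) f a c *m g c b).
Proof.
apply/matrixP => p q; rewrite !mxE summxE.
under eq_bigr do rewrite !mxE.
rewrite (sum_blocks (fun c k => f (p %/ n)%N c (mord p) k * g c (q %/ n)%N k (mord q))).
by apply: eq_bigr => c _; rewrite mxE.
Qed.

Lemma eq_mkblk (f g : nat -> nat -> M) :
  (forall a b, (a < m)%N -> (b < m)%N -> f a b = g a b) -> mkblk f = mkblk g.
Proof. by move=> fg; apply/matrixP => p q; rewrite !mxE fg ?blk_index_lt. Qed.

Lemma mkblkD (f g : nat -> nat -> M) :
  mkblk f + mkblk g = mkblk (fun a b => f a b + g a b).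
Proof. by apply/matrixP => p q; rewrite !mxE. Qed.

Lemma mkblkZ x (f : nat -> nat -> M) : x *: mkblk f = mkblk (fun a b => x *: f a b).
Proof. by apply/matrixP => p q; rewrite !mxE. Qed.

Lemma mkblk1 : mkblk (fun a b => if a == b then 1%:M : M else 0) = 1%:M.
Proof.
apply/matrixP => p q; rewrite !mxE.
have -> : (p == q) = (p %/ n == q %/ n)%N && (mord p == mord q).
  apply/eqP/andP => [-> //|[/eqP ediv /eqP /(congr1 val) /= emod]].
  by apply: val_inj; rewrite [LHS](divn_eq p n) [RHS](divn_eq q n) ediv emod.
by case: eqP; rewrite ?mxE.
Qed.

Definition eblk (a b : nat) (X : M) : 'M[{poly F}]_(m * n) :=
  mkblk (fun a' b' => if (a' == a) && (b' == b) then X else 0).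

Lemma eblk_mul a b c (X Y : M) :
  (b < m)%N -> eblk a b X *m eblk b c Y = eblk a c (X *m Y).
Proof.
move=> hb; rewrite mkblk_mul; apply: eq_mkblk => a' c' _ _.
rewrite (sum_ord_pt (c0 := Ordinal hb)) /= ?eqxx ?andbT; last first.
  by move=> d; rewrite -val_eqE /= => /negbTE ->; rewrite andbF mul0mx.
by case: (a' == a); case: (c' == c); rewrite /= ?mulmx0 ?mul0mx.
Qed.

Lemma mkblk_mul_eblk (f : nat -> nat -> M) a b X :
  (a < m)%N -> (forall c, f c a = if c == a then 1%:M else 0) ->
  mkblk f *m eblk a b X = eblk a b X.
Proof.
move=> ha fa; rewrite mkblk_mul; apply: eq_mkblk => c d _ _.
rewrite (sum_ord_pt (c0 := Ordinal ha)) /= ?eqxx; last first.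
  by move=> e; rewrite -val_eqE /= => /negbTE ->; rewrite mulmx0.
by rewrite fa; case: (c == a); rewrite ?mul1mx ?mul0mx.
Qed.

Lemma eblk_mul_mkblk (f : nat -> nat -> M) a b X :
  (b < m)%N -> (forall c, f b c = if b == c then 1%:M else 0) ->
  eblk a b X *m mkblk f = eblk a b X.
Proof.
move=> hb fb; rewrite mkblk_mul; apply: eq_mkblk => c d _ _.
rewrite (sum_ord_pt (c0 := Ordinal hb)) /= ?eqxx ?andbT; last first.
  by move=> e; rewrite -val_eqE /= => /negbTE ->; rewrite andbF mul0mx.
rewrite fb (eq_sym b d).
by case: (c == a); case: (d == b); rewrite /= ?mulmx1 ?mul0mx ?mulmx0.
Qed.

Definition patch (w k : nat) (d : nat -> M) (W : nat -> nat -> M) (a b : nat) : M :=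
  if (w <= a < w + k)%N && (w <= b < w + k)%N then W (a - w)%N (b - w)%N
  else if a == b then d a else 0.

Lemma patch_mul w k d d' W W' a b :
  (w + k <= m)%N -> (a < m)%N -> (b < m)%N ->
  \sum_(c < m) patch w k d W a c *m patch w k d' W' c b =
  patch w k (fun a => d a *m d' a) (fun x y => \sum_(z < k) W x z *m W' z y) a b.
Proof.
move=> hwk ha hb; have win z : (w <= w + z < w + k)%N = (z < k)%N by lia.
case: (boolP (w <= a < w + k)%N) => /= wa.
  pose G c := patch w k d W a c *m patch w k d' W' c b.
  rewrite (@sum_ord_window _ m w k G hwk) /G; last first.
    move=> c _ /negbTE wc; rewrite /G /patch wc andbF.
    by case: eqP => [ac|]; [move: wa; rewrite ac wc | rewrite mul0mx].
  rewrite /patch wa /=; case: (boolP (w <= b < w + k)%N) => /= wb.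
    by apply: eq_bigr => z _; rewrite win ltn_ord addKn.
  rewrite (_ : (a == b) = false); last by apply: contraNF wb => /eqP <-.
  apply: big1 => z _; rewrite win ltn_ord /= addKn.
  by rewrite (_ : (w + z == b)%N = false) ?mulmx0 //; apply: contraNF wb => /eqP <-; rewrite win.
rewrite (sum_ord_pt (c0 := Ordinal ha)); last first.
  by move=> c; rewrite -val_eqE /patch (negbTE wa) /= eq_sym => /negbTE ->; rewrite mul0mx.
by rewrite /patch (negbTE wa) /= eqxx; case: eqP; rewrite ?mulmx0.
Qed.

Lemma mkblk_patch_mul w k d d' W W' :
  (w + k <= m)%N ->
  mkblk (patch w k d W) *m mkblk (patch w k d' W') =
  mkblk (patch w k (fun a => d a *m d' a) (fun x y => \sum_(z < k) W x z *m W' z y)).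
Proof. by move=> hwk; rewrite mkblk_mul; apply: eq_mkblk => a b; apply: patch_mul. Qed.

Lemma patchD w k d d' W W' a b :
  patch w k d W a b + patch w k d' W' a b =
  patch w k (fun a => d a + d' a) (fun x y => W x y + W' x y) a b.
Proof. by rewrite /patch; case: ifP => //; case: ifP => // _ _; rewrite addr0. Qed.

Lemma eq_patch w k d d' W W' a b :
  (forall a, ~~ (w <= a < w + k)%N -> d a = d' a) ->
  (forall x y, (x < k)%N -> (y < k)%N -> W x y = W' x y) ->
  patch w k d W a b = patch w k d' W' a b.
Proof.
move=> dd' WW'; rewrite /patch; case: ifP => [/andP[wa wb]|]; first by apply: WW'; lia.
by case: eqP => // <- /negbT; rewrite andbb; apply: dd'.
Qed.

Definition blk2 (a00 a01 a10 a11 : M) (x y : nat) : M :=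
  match x, y with
  | 0%N, 0%N => a00 | 0%N, 1%N => a01 | 1%N, 0%N => a10 | 1%N, 1%N => a11 | _, _ => 0
  end.

Lemma patch2E w d (W : nat -> nat -> M) a b :
  patch w 2 d W a b =
  if (a == w) && (b == w) then W 0%N 0%N else if (a == w) && (b == w.+1) then W 0%N 1%N
  else if (a == w.+1) && (b == w) then W 1%N 0%N
  else if (a == w.+1) && (b == w.+1) then W 1%N 1%N
  else if a == b then d a else 0.
Proof.
rewrite /patch; case: (boolP ((w <= a < w + 2) && (w <= b < w + 2))%N) => [/andP[wa wb]|nw];
  last by case_ifs.
have ea : a = w \/ a = w.+1 by lia.
have eb : b = w \/ b = w.+1 by lia.
by case: ea eb => -> [] ->;
  rewrite ?subnn ?subSnn ?eqxx ?(ltn_eqF (ltnSn w)) ?(gtn_eqF (ltnSn w)).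
Qed.

Lemma mkblk_patch_upper w X :
  mkblk (patch w 2 (fun _ => 1%:M) (blk2 1%:M X 0 1%:M)) = 1%:M + eblk w w.+1 X.
Proof.
rewrite -mkblk1 mkblkD; apply: eq_mkblk => a b _ _.
by rewrite patch2E /=; case_ifs; rewrite ?addr0 ?add0r.
Qed.

Lemma mkblk_patch_lower w X :
  mkblk (patch w 2 (fun _ => 1%:M) (blk2 1%:M 0 X 1%:M)) = 1%:M + eblk w.+1 w X.
Proof.
rewrite -mkblk1 mkblkD; apply: eq_mkblk => a b _ _.
by rewrite patch2E /=; case_ifs; rewrite ?addr0 ?add0r.
Qed.

End BlockMatrices.


Section SystemMatrices.
Variables (F : fieldType) (m n r : nat) (Ac : nat -> 'M[F]_n)
          (A E : 'M[F]_r) (B : 'M[F]_(r, n)) (C : 'M[F]_(n, r)).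
Local Notation M := 'M[{poly F}]_n.
Local Notation sysM := (sysM m Ac A E B C).

Lemma horner_shiftS i : (1 <= i <= m)%N ->
  horner_shift m Ac i = cst (Ac (m - i)%N) + 'X *: horner_shift m Ac i.-1.
Proof.
move=> hi; rewrite /horner_shift big_ord_recl expr0 scale1r addn0; congr (_ + _).
rewrite scaler_sumr prednK; last by lia.
apply: eq_bigr => j _; rewrite scalerA -exprS /=.
by have -> : (m - i + j.+1 = m - i.-1 + j)%N by lia.
Qed.

Section UntouchedBlock.
Variables (j a : nat).
Hypotheses (hj : (j <= m)%N) (haj : (a + j != m)%N) (haj1 : (a + j.+1 != m)%N).

Lemma fiedler_blk_unit_row c : fiedler_blk m Ac j a c = if a == c then 1%:M else 0.
Proof. by rewrite /fiedler_blk /M0_blk /Mm_blk /Mi_blk; case_ifs. Qed.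

Lemma fiedler_blk_unit_col c : fiedler_blk m Ac j c a = if c == a then 1%:M else 0.
Proof. by rewrite /fiedler_blk /M0_blk /Mm_blk /Mi_blk; case_ifs. Qed.

End UntouchedBlock.

Lemma emB_mul_eblk a b (X : M) : (a != m - 1)%N -> emB m B *m eblk m a b X = 0.
Proof.
move=> ha; apply/matrixP => p q; rewrite !mxE big1 // => s _; rewrite !mxE.
case: (s %/ n =P m - 1)%N => [->|_]; last by rewrite mul0r.
by rewrite (eq_sym (m - 1)%N) (negbTE ha) mxE mulr0.
Qed.

Lemma eblk_mul_emC a b (X : M) : (b != m - 1)%N -> eblk m a b X *m emC m C = 0.
Proof.
move=> hb; apply/matrixP => p q; rewrite !mxE big1 // => s _; rewrite !mxE.
case: (s %/ n =P m - 1)%N => [->|_]; last by rewrite mulr0.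
by rewrite (eq_sym (m - 1)%N) (negbTE hb) andbF mxE mul0r.
Qed.

Definition sysE a b (X : M) : 'M[{poly F}]_(m * n + r) := block_mx (eblk m a b X) 0 0 0.

Lemma sysE_mul a b c (X Y : M) : (b < m)%N -> sysE a b X *m sysE b c Y = sysE a c (X *m Y).
Proof. by move=> hb; rewrite /sysE mulmx_block !(mulmx0, mul0mx, addr0) eblk_mul. Qed.

Lemma sysE_unitriangular a b (X : M) :
  block_mx (1%:M + eblk m a b X) 0 0 1%:M = 1%:M + sysE a b X.
Proof. by rewrite /sysE scalar_mx_block add_block_mx !(addr0, add0r). Qed.

Lemma sysM_mul_sysE j a b (X : M) : (j <= m)%N -> (a < m)%N ->
  (a + j != m)%N -> (a + j.+1 != m)%N -> sysM j *m sysE a b X = sysE a b X.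
Proof.
move=> hj ha haj haj1; rewrite /sysM /sysE.
have col_a := mkblk_mul_eblk b X ha (fiedler_blk_unit_col hj haj haj1).
case: ifP => [/eqP j0|_]; last case: ifP => [/eqP jm|_]; try subst j.
all: rewrite mulmx_block !(mulmx0, mul0mx, addr0) ?col_a //.
by rewrite mulNmx emB_mul_eblk ?oppr0 //; apply/eqP; lia.
Qed.

Lemma sysE_mul_sysM j a b (X : M) : (j <= m)%N -> (b < m)%N ->
  (b + j != m)%N -> (b + j.+1 != m)%N -> sysE a b X *m sysM j = sysE a b X.
Proof.
move=> hj hb hbj hbj1; rewrite /sysM /sysE.
have row_b := eblk_mul_mkblk a X hb (fiedler_blk_unit_row hj hbj hbj1).
case: ifP => [/eqP j0|_]; last case: ifP => [/eqP jm|_]; try subst j.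
all: rewrite mulmx_block !(mulmx0, mul0mx, addr0, add0r) ?row_b //.
by rewrite mulmxN eblk_mul_emC ?oppr0 //; apply/eqP; lia.
Qed.

(* The two equations say that block column and block row b of N are those
   of the identity matrix. *)
Lemma unipotent_conj a b c (U V : M) (N : 'M[{poly F}]_(m * n + r)) : (b < m)%N ->
  N *m sysE b c V = sysE b c V -> sysE a b U *m N = sysE a b U ->
  (1%:M + sysE a b U) *m N *m (1%:M + sysE b c V) =
  N + sysE a b U + sysE b c V + sysE a c (U *m V).
Proof.
move=> hb NE EN.
rewrite mulmxDl mul1mx EN mulmxDr mulmx1 mulmxDl NE sysE_mul //.
by rewrite !addrA.
Qed.

End SystemMatrices.

Ltac mx_norm := do 2 rewrite ?(mul0mx, mulmx0, mul1mx, mulmx1, add0r, addr0, scaler0,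
  mulNmx, mulmxN, scalerN, oppr0, opprK, scalerA) -?scalemxAl -?scalemxAr -?expr2.

Section AuxiliaryFactors.
Variables (F : fieldType) (m n r : nat) (Ac : nat -> 'M[F]_n)
          (A E : 'M[F]_r) (B : 'M[F]_(r, n)) (C : 'M[F]_(n, r)).
Variable i : nat.
Hypotheses (hi1 : (1 <= i)%N) (him : (i < m)%N).
Local Notation M := 'M[{poly F}]_n.
Local Notation P := (horner_shift m Ac).
Local Notation lam := ('X *: (1%:M : M)).
Local Notation window := (patch i.-1 2).
Local Notation sysE := (sysE m r).
Local Notation sysM := (sysM m Ac A E B C).

Let hP : P i = cst (Ac (m - i)%N) + 'X *: P i.-1.
Proof. by apply: horner_shiftS; lia. Qed.
Let hw : (i.-1 + 2 <= m)%N. Proof. lia. Qed.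
Let hi : i.-1.+1 = i. Proof. lia. Qed.

Definition lamD_outside (a : nat) : M := if (a < i.-1)%N then 0 else lam.

Lemma QB_window a b :
  blkT (Q_blk F n i) a b = window (fun _ => 1%:M) (blk2 1%:M 0 lam 1%:M) a b.
Proof. by rewrite patch2E /blkT /Q_blk /=; case_ifs. Qed.

Lemma Q_window a b : Q_blk F n i a b = window (fun _ => 1%:M) (blk2 1%:M lam 0 1%:M) a b.
Proof. by rewrite patch2E /Q_blk /=; case_ifs. Qed.

Lemma R_window a b : R_blk m Ac i a b = window (fun _ => 1%:M) (blk2 0 1%:M 1%:M (P i)) a b.
Proof. by rewrite patch2E /R_blk /=; case_ifs. Qed.

Lemma R_blk_sym : mkblk m (blkT (R_blk m Ac i)) = mkblk m (R_blk m Ac i).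
Proof. by apply: eq_mkblk => a b _ _; rewrite /blkT /R_blk; case_ifs. Qed.

Lemma lamD_window a b :
  'X *: D_blk m Ac i a b = window lamD_outside (blk2 ('X *: P i.-1) 0 0 lam) a b.
Proof. by rewrite patch2E /D_blk /lamD_outside /=; case_ifs; rewrite scaler0. Qed.

Lemma lamD1_window a b :
  'X *: D_blk m Ac i.+1 a b = window lamD_outside (blk2 0 0 0 ('X *: P i)) a b.
Proof. by rewrite patch2E /D_blk /lamD_outside /=; case_ifs; rewrite scaler0. Qed.

Lemma T_window a b :
  T_blk m Ac i a b = window (fun _ => 0) (blk2 0 ('X *: P i.-1) lam ('X ^+ 2 *: P i.-1)) a b.
Proof. by rewrite patch2E /T_blk /=; case_ifs. Qed.

Lemma TB_window a b :
  blkT (T_blk m Ac i) a b = window (fun _ => 0) (blk2 0 lam ('X *: P i.-1) ('X ^+ 2 *: P i.-1)) a b.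
Proof. by rewrite patch2E /blkT /T_blk /=; case_ifs. Qed.

Lemma fiedler_window a b :
  fiedler_blk m Ac (m - i) a b =
  window (fun _ => 1%:M) (blk2 (- cst (Ac (m - i)%N)) 1%:M 1%:M 0) a b.
Proof.
rewrite patch2E /fiedler_blk /Mi_blk /=.
have -> : (m - (m - i) - 1 = i.-1)%N by lia.
by case_ifs.
Qed.

Lemma QB_lamD_R :
  mkblk m (blkT (Q_blk F n i)) *m ('X *: mkblk m (D_blk m Ac i)) *m mkblk m (R_blk m Ac i) =
  'X *: mkblk m (D_blk m Ac i.+1) + mkblk m (T_blk m Ac i).
Proof.
rewrite !mkblkZ mkblkD (eq_mkblk (fun a b _ _ => QB_window a b)).
rewrite (eq_mkblk (fun a b _ _ => lamD_window a b)) (eq_mkblk (fun a b _ _ => R_window a b)).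
rewrite !mkblk_patch_mul //; apply: eq_mkblk => a b _ _.
rewrite lamD1_window T_window patchD; apply: eq_patch => [c _|x y]; first by mx_norm.
case: x => [|[|//]] _; case: y => [|[|//]] _; rewrite !big_ord_recr !big_ord0 /=; mx_norm => //.
by rewrite addrC.
Qed.

Lemma RB_lamD_Q :
  mkblk m (blkT (R_blk m Ac i)) *m ('X *: mkblk m (D_blk m Ac i)) *m mkblk m (Q_blk F n i) =
  'X *: mkblk m (D_blk m Ac i.+1) + mkblk m (blkT (T_blk m Ac i)).
Proof.
rewrite R_blk_sym !mkblkZ mkblkD (eq_mkblk (fun a b _ _ => R_window a b)).
rewrite (eq_mkblk (fun a b _ _ => lamD_window a b)) (eq_mkblk (fun a b _ _ => Q_window a b)).
rewrite !mkblk_patch_mul //; apply: eq_mkblk => a b _ _.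
rewrite lamD1_window TB_window patchD; apply: eq_patch => [c _|x y]; first by mx_norm.
case: x => [|[|//]] _; case: y => [|[|//]] _; rewrite !big_ord_recr !big_ord0 /=; mx_norm => //.
by rewrite addrC.
Qed.

Lemma fiedler_mul_R :
  mkblk m (fiedler_blk m Ac (m - i)) *m mkblk m (R_blk m Ac i) =
  1%:M + eblk m i.-1 i ('X *: P i.-1).
Proof.
rewrite (eq_mkblk (fun a b _ _ => fiedler_window a b)) (eq_mkblk (fun a b _ _ => R_window a b)).
rewrite mkblk_patch_mul // -[X in eblk _ _ X _]hi -mkblk_patch_upper; apply: eq_mkblk => a b _ _.
apply: eq_patch => [c _|x y]; first by mx_norm.
case: x => [|[|//]] _; case: y => [|[|//]] _; rewrite !big_ord_recr !big_ord0 /=; mx_norm => //.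
by rewrite hP addKr.
Qed.

Lemma RB_mul_fiedler :
  mkblk m (blkT (R_blk m Ac i)) *m mkblk m (fiedler_blk m Ac (m - i)) =
  1%:M + eblk m i i.-1 ('X *: P i.-1).
Proof.
rewrite R_blk_sym (eq_mkblk (fun a b _ _ => R_window a b)).
rewrite (eq_mkblk (fun a b _ _ => fiedler_window a b)).
rewrite mkblk_patch_mul // -[X in eblk _ X _ _]hi -mkblk_patch_lower; apply: eq_mkblk => a b _ _.
apply: eq_patch => [c _|x y]; first by mx_norm.
case: x => [|[|//]] _; case: y => [|[|//]] _; rewrite !big_ord_recr !big_ord0 /=; mx_norm => //.
by rewrite hP addKr.
Qed.

Lemma QB_unipotent : mkblk m (blkT (Q_blk F n i)) = 1%:M + eblk m i i.-1 lam.
Proof.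
rewrite -[X in eblk _ X _ _]hi -mkblk_patch_lower.
by apply: eq_mkblk => a b _ _; apply: QB_window.
Qed.

Lemma Q_unipotent : mkblk m (Q_blk F n i) = 1%:M + eblk m i.-1 i lam.
Proof.
rewrite -[X in eblk _ _ X _]hi -mkblk_patch_upper.
by apply: eq_mkblk => a b _ _; apply: Q_window.
Qed.

Lemma T_elementary :
  mkblk m (T_blk m Ac i) =
  eblk m i i.-1 lam + eblk m i.-1 i ('X *: P i.-1) + eblk m i i ('X ^+ 2 *: P i.-1).
Proof.
by rewrite /eblk !mkblkD; apply: eq_mkblk => a b _ _; rewrite /T_blk; case_ifs; mx_norm.
Qed.

Lemma TB_elementary :
  mkblk m (blkT (T_blk m Ac i)) =
  eblk m i i.-1 ('X *: P i.-1) + eblk m i.-1 i lam + eblk m i i ('X ^+ 2 *: P i.-1).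
Proof.
by rewrite /eblk !mkblkD; apply: eq_mkblk => a b _ _; rewrite /blkT /T_blk; case_ifs; mx_norm.
Qed.

Lemma sysT_elementary :
  sysT m r Ac i = sysE i i.-1 lam + sysE i.-1 i ('X *: P i.-1) + sysE i i ('X ^+ 2 *: P i.-1).
Proof. by rewrite /sysT T_elementary /sysE !add_block_mx !addr0. Qed.

Lemma sysTB_elementary :
  sysTB m r Ac i = sysE i i.-1 ('X *: P i.-1) + sysE i.-1 i lam + sysE i i ('X ^+ 2 *: P i.-1).
Proof. by rewrite /sysTB TB_elementary /sysE !add_block_mx !addr0. Qed.

Lemma sysQB_unipotent : sysQB F m n r i = 1%:M + sysE i i.-1 lam.
Proof. by rewrite /sysQB QB_unipotent sysE_unitriangular. Qed.

Lemma sysQ_unipotent : sysQ F m n r i = 1%:M + sysE i.-1 i lam.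
Proof. by rewrite /sysQ Q_unipotent sysE_unitriangular. Qed.

Let sysM_inner : sysM (m - i) = block_mx (mkblk m (fiedler_blk m Ac (m - i))) 0 0 1%:M.
Proof. by rewrite /sysM; case_ifs. Qed.

Lemma sysM_mul_sysR : sysM (m - i) *m sysR m r Ac i = 1%:M + sysE i.-1 i ('X *: P i.-1).
Proof.
by rewrite sysM_inner /sysR mulmx_block; mx_norm; rewrite fiedler_mul_R sysE_unitriangular.
Qed.

Lemma sysRB_mul_sysM : sysRB m r Ac i *m sysM (m - i) = 1%:M + sysE i i.-1 ('X *: P i.-1).
Proof.
by rewrite sysM_inner /sysRB mulmx_block; mx_norm; rewrite RB_mul_fiedler sysE_unitriangular.
Qed.

Lemma sysQB_lamD_sysR :
  sysQB F m n r i *m ('X *: sysD m Ac E i) *m sysR m r Ac i =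
  'X *: sysD m Ac E i.+1 + sysT m r Ac i.
Proof.
rewrite /sysQB /sysD /sysR /sysT !scale_block_mx !mulmx_block add_block_mx.
by rewrite !(scaler0, mulmx0, mul0mx, mulmx1, mul1mx, addr0, add0r) QB_lamD_R.
Qed.

Lemma sysRB_lamD_sysQ :
  sysRB m r Ac i *m ('X *: sysD m Ac E i) *m sysQ F m n r i =
  'X *: sysD m Ac E i.+1 + sysTB m r Ac i.
Proof.
rewrite /sysRB /sysD /sysQ /sysTB !scale_block_mx !mulmx_block add_block_mx.
by rewrite !(scaler0, mulmx0, mul0mx, mulmx1, mul1mx, addr0, add0r) RB_lamD_Q.
Qed.

Lemma sysQB_fiedler_pair_sysR :
  sysQB F m n r i *m (sysM (m - i.+1) *m sysM (m - i)) *m sysR m r Ac i =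
  sysM (m - i.+1) + sysT m r Ac i.
Proof.
rewrite !mulmxA -(mulmxA _ (sysM (m - i))) sysM_mul_sysR sysQB_unipotent.
rewrite unipotent_conj; [|lia|apply: sysM_mul_sysE; lia|apply: sysE_mul_sysM; lia].
by rewrite sysT_elementary !addrA; mx_norm.
Qed.

Lemma sysRB_fiedler_pair_sysQ :
  sysRB m r Ac i *m (sysM (m - i) *m sysM (m - i.+1)) *m sysQ F m n r i =
  sysM (m - i.+1) + sysTB m r Ac i.
Proof.
rewrite !mulmxA sysRB_mul_sysM sysQ_unipotent.
rewrite unipotent_conj; [|lia|apply: sysM_mul_sysE; lia|apply: sysE_mul_sysM; lia].
by rewrite sysTB_elementary !addrA; mx_norm.
Qed.

Lemma sysM_absorbs_T j : (j + i + 2 <= m)%N ->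
  [/\ sysT m r Ac i *m sysM j = sysT m r Ac i, sysM j *m sysT m r Ac i = sysT m r Ac i,
      sysTB m r Ac i *m sysM j = sysTB m r Ac i & sysM j *m sysTB m r Ac i = sysTB m r Ac i].
Proof.
move=> hj; rewrite sysT_elementary sysTB_elementary.
by split; rewrite ?mulmxDl ?mulmxDr ?sysE_mul_sysM ?sysM_mul_sysE //; lia.
Qed.

End AuxiliaryFactors.

Unset Implicit Arguments.

Theorem lemma4p10 (F : fieldType) (m n r : nat) (Ac : nat -> 'M[F]_n)
    (A E : 'M[F]_r) (B : 'M[F]_(r, n)) (C : 'M[F]_(n, r)) :
  Ac m != 0 ->
  forall i : nat, (1 <= i <= m - 1)%N ->
  let M := sysM m Ac A E B C in
  let Q := sysQ F m n r in
  let QB := sysQB F m n r in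
  let R := sysR m r Ac in
  let RB := sysRB m r Ac in
  let T := sysT m r Ac in
  let TB := sysTB m r Ac in
  let D := sysD m Ac E in
  [/\ (* (a) *)
      QB i *m ('X *: D i) *m R i = 'X *: D i.+1 + T i
      /\ QB i *m (M (m - i.+1)%N *m M (m - i)%N) *m R i = M (m - i.+1)%N + T i,
      (* (b) *)
      RB i *m ('X *: D i) *m Q i = 'X *: D i.+1 + TB i
      /\ RB i *m (M (m - i)%N *m M (m - i.+1)%N) *m Q i = M (m - i.+1)%N + TB i
    & (* (c): all j <= m - i - 2 (as integers) *)
      forall j : nat, (j + i + 2 <= m)%N ->
        [/\ T i *m M j = T i, M j *m T i = T i,
            TB i *m M j = TB i & M j *m TB i = TB i]].
Proof.
move=> _ i /andP[hi1 hi] M Q QB R RB T TB D.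
have him : (i < m)%N by lia.
split.
- by split; [exact: sysQB_lamD_sysR | exact: sysQB_fiedler_pair_sysR].
- by split; [exact: sysRB_lamD_sysQ | exact: sysRB_fiedler_pair_sysQ].
- by move=> j hj; exact: sysM_absorbs_T.
Qed.
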